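(* Let $(\mathcal A,X,\alpha)$ be a PTS of type $\diamond\in\{0,*,\omega,\infty\}$. For every $x\in X$ the defining equations of the trace determine a well-defined $\sigma$-finite pre-measure $\mathbf{tr}(x):\mathcal S_\diamond\to[0,1]$, and its unique extension to a measure on $\sigma(\mathcal S_\diamond)$ is a sub-probability measure; for $\diamond\in\{\omega,\infty\}$ it is a probability measure.
   Context: $\mathcal A$ is a finite alphabet with $\sigma$-algebra $\mathcal P(\mathcal A)$; $\mathbf 1=\{\checkmark\}$; products carry product $\sigma$-algebras and disjoint unions the disjoint-union $\sigma$-algebra. $\mathbb S(Y)$ / $\mathbb P(Y)$: sub-probability / probability measures on $\Sigma_Y$, measurable structure generated by evaluation maps $P\mapsto P(S)$. A PTS of type $\diamond$ is $(\mathcal A,X,\alpha)$ with $X$ a measurable space and $\alpha$ a measurable map $X\to\mathbb S(\mathcal A\times X)$ (type $0$), $X\to\mathbb S(\mathcal A\times X+\mathbf 1)$ (type $*$), $X\to\mathbb P(\mathcal A\times X)$ (type $\omega$), $X\to\mathbb P(\mathcal A\times X+\mathbf 1)$ (type $\infty$). $\mathbf P_a(x,S):=\alpha(x)(\{a\}\times S)$ for $S\in\Sigma_X$. Words: $\mathcal A^*,\mathcal A^\omega$ finite/infinite words, $\mathcal A^\infty=\mathcal A^*\cup\mathcal A^\omega$, $\mathcal A^0:=\emptyset$ for type $0$ (carrier), $\sqsubseteq$ prefix; $C_\omega(u)=\{v\in\mathcal A^\omega:u\sqsubseteq v\}$, $C_\infty(u)=\{v\in\mathcal A^\infty:u\sqsubseteq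 v\}$. Semirings: $\mathcal S_0=\{\emptyset\}$ on $\emptyset$, $\mathcal S_*=\{\emptyset\}\cup\{\{u\}:u\in\mathcal A^*\}$, $\mathcal S_\omega=\{\emptyset\}\cup\{C_\omega(u):u\in\mathcal A^*\}$, $\mathcal S_\infty=\{\emptyset\}\cup\{\{u\}\}_{u\in\mathcal A^*}\cup\{C_\infty(u)\}_{u\in\mathcal A^*}$. Trace equations: $\mathbf{tr}(x)(\emptyset)=0$; for $\diamond\in\{*,\infty\}$: $\mathbf{tr}(x)(\{\epsilon\})=\alpha(x)(\mathbf 1)$ and $\mathbf{tr}(x)(\{au\})=\int_{x'\in X}\mathbf{tr}(x')(\{u\})\,d\mathbf P_a(x,x')$; for $\diamond\in\{\omega,\infty\}$: $\mathbf{tr}(x)(C_\diamond(\epsilon))=1$ and $\mathbf{tr}(x)(C_\diamond(au))=\int_{x'\in X}\mathbf{tr}(x')(C_\diamond(u))\,d\mathbf P_a(x,x')$, for all $a\in\mathcal A$, $u\in\mathcal A^*$. A pre-measure on a semiring is a map into $[0,\infty]$ vanishing on $\emptyset$ and $\sigma$-additive (on countable disjoint families whose union lies in the semiring); $\sigma$-finite means some countable cover by members of finite measure exists. *)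

From HB Require Import structures.
From mathcomp Require Import all_boot all_order all_algebra.
From mathcomp Require Import all_classical all_reals all_analysis.
From mathcomp Require Import measurable_realfun.

Set Implicit Arguments.
Unset Strict Implicit.
Unset Printing Implicit Defensive.
Import Order.TTheory GRing.Theory Num.Theory.

Local Open Scope classical_set_scope.
Local Open Scope ring_scope.
Local Open Scope ereal_scope.

(* The measurable space  A x X + 1  (A finite with the discrete sigma-algebra *)
(* P(A), product sigma-algebra on A x X, disjoint-union sigma-algebra with   *)
(* the one-point space 1 = {checkmark}).  It is represented on the type      *)
(* option (A * X): [Some (a, x)] is (a, x) in A x X and [None] is checkmark. *)
(* Since A is finite and carries P(A), a set S is measurable iff every       *)
(* section [set x | S (Some (a, x))] is measurable in X (no constraint on    *)
(* the None part, since 1 carries its power set).                            *)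

Definition pts_space (A : Type) (X : Type) := option (A * X).

Section pts_space_instance.
Context (A : finType) (d : measure_display) (X : measurableType d).

Definition pts_measurable : set (set (pts_space A X)) :=
  [set S | forall a : A, measurable [set x : X | S (Some (a, x))]].

Lemma pts_measurable0 : pts_measurable set0.
Proof. by move=> a; rewrite [X in measurable X](_ : _ = set0). Qed.

Lemma pts_measurableC S : pts_measurable S -> pts_measurable (~` S).
Proof.
move=> mS a.
rewrite [X in measurable X](_ : _ = ~` [set x : X | S (Some (a, x))]) //.
exact: measurableC.
Qed.

Lemma pts_measurableU (F : (set (pts_space A X))^nat) :
  (forall i, pts_measurable (F i)) -> pts_measurable (\bigcup_i F i).
Proof.
move=> mF a.
rewrite [X in measurable X](_ : _ = \bigcup_i [set x : X | F i (Some (a, x))]).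
  by apply: bigcupT_measurable => i; exact: mF.
by apply/seteqP; split => x /= [i _ Fi]; exists i.
Qed.

HB.instance Definition _ := Pointed.copy (pts_space A X) (option (A * X)).
HB.instance Definition _ := @isMeasurable.Build default_measure_display
  (pts_space A X) pts_measurable pts_measurable0 pts_measurableC
  pts_measurableU.

End pts_space_instance.

(*   A^0 := empty (type void), A^* = seq A, A^omega = nat -> A,              *)
(*   A^infty = A^* + A^omega  (inl = finite word, inr = infinite word).       *)

Section words.
Context (A : finType).

Definition inf_word := (seq A + (nat -> A))%type.

Definition cyl_omega (u : seq A) : set (nat -> A) :=
  [set v | mkseq v (size u) = u].

Definition cyl_inf (u : seq A) : set inf_word :=
  [set w | match w with
           | inl v => prefix u v
           | inr v => mkseq v (size u) = u
           end].

Definition S_zero : set (set void) := [set s | s = set0].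

Definition S_star : set (set (seq A)) :=
  [set s | s = set0 \/ exists u : seq A, s = [set u]].

Definition S_omega : set (set (nat -> A)) :=
  [set s | s = set0 \/ exists u : seq A, s = cyl_omega u].

Definition S_inf : set (set inf_word) :=
  [set s | s = set0 \/ (exists u : seq A, s = [set inl u])
                    \/ (exists u : seq A, s = cyl_inf u)].

End words.

Section measure_notions.
Context (R : realType) (W : Type).

Definition premeasure_on (S : set (set W)) (m : set W -> \bar R) : Prop :=
  [/\ m set0 = 0,
      (forall s, S s -> 0 <= m s) &
      (forall F : nat -> set W, (forall n, S (F n)) -> trivIset setT F ->
         S (\bigcup_n F n) ->
         (fun n => \sum_(0 <= k < n) m (F k)) @ \oo --> m (\bigcup_n F n))].

Definition sigma_finite_on (S : set (set W)) (m : set W -> \bar R) : Prop :=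
  exists F : nat -> set W, [/\ (forall n, S (F n)),
                               (forall n, m (F n) < +oo) &
                               \bigcup_n F n = setT].

(* measure on the sigma-algebra Sig (a family of sets closed under countable *)
(* unions, so no union condition is needed)                                  *)
Definition measure_on (Sig : set (set W)) (mu : set W -> \bar R) : Prop :=
  [/\ mu set0 = 0,
      (forall s, Sig s -> 0 <= mu s) &
      (forall F : nat -> set W, (forall n, Sig (F n)) -> trivIset setT F ->
         (fun n => \sum_(0 <= k < n) mu (F k)) @ \oo --> mu (\bigcup_n F n))].

Definition trace_conclusion (X : Type) (S : set (set W))
    (Sol : (X -> set W -> \bar R) -> Prop) (prob : bool) : Prop :=
  [/\ (exists tr, Sol tr),
      (forall tr1 tr2, Sol tr1 -> Sol tr2 ->
         forall x s, S s -> tr1 x s = tr2 x s) &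
      (forall tr, Sol tr -> forall x : X,
        [/\ (forall s, S s -> 0 <= tr x s <= 1),
            premeasure_on S (tr x),
            sigma_finite_on S (tr x) &
            exists mu : set W -> \bar R,
              [/\ measure_on <<s S >> mu,
                  (forall s, S s -> mu s = tr x s),
                  (forall nu, measure_on <<s S >> nu ->
                     (forall s, S s -> nu s = tr x s) ->
                     forall B, <<s S >> B -> nu B = mu B) &
                  (if prob then mu setT = 1 else mu setT <= 1)]])].

End measure_notions.

(*  P_a(x, .) = alpha(x)({a} x .), so                                        *)
(*    int_{x' in X} f(x') dP_a(x, x')                                        *)
(*      = int_{y in {a} x X} f(snd y) d alpha(x)                              *)
(*  which is how the integrals are written below.                            *)
(* A solution must have measurable sections x |-> tr(x)(s) for s in the      *)
(* semiring, so that the integrals in the equations are meaningful.          *)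

Section trace_equations.
Context (R : realType) (d : measure_display) (X : measurableType d)
        (A : finType).
Variable alpha : X -> {measure set (pts_space A X) -> \bar R}.

Definition letter_set (a : A) : set (pts_space A X) :=
  [set y | exists x' : X, y = Some (a, x')].

Definition lift_X (f : X -> \bar R) (y : pts_space A X) : \bar R :=
  match y with Some (_, x') => f x' | None => 0 end.

Definition Pa_integral (a : A) (x : X) (f : X -> \bar R) : \bar R :=
  \int[alpha x]_(y in letter_set a) lift_X f y.

Definition sections_measurable (W : Type) (S : set (set W))
    (tr : X -> set W -> \bar R) : Prop :=
  forall s, S s -> measurable_fun [set: X] (fun x => (tr x s : \bar R)).

Definition trace_sol_zero (tr : X -> set void -> \bar R) : Prop :=
  sections_measurable S_zero tr /\ forall x, tr x set0 = 0.

Definition trace_sol_star (tr : X -> set (seq A) -> \bar R) : Prop :=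
  [/\ sections_measurable (@S_star A) tr,
      (forall x, tr x set0 = 0),
      (forall x, tr x [set [::]] = alpha x [set None]) &
      (forall x a u, tr x [set a :: u] =
                     Pa_integral a x (fun x' => tr x' [set u]))].

Definition trace_sol_omega (tr : X -> set (nat -> A) -> \bar R) : Prop :=
  [/\ sections_measurable (@S_omega A) tr,
      (forall x, tr x set0 = 0),
      (forall x, tr x (cyl_omega [::]) = 1) &
      (forall x a u, tr x (cyl_omega (a :: u)) =
                     Pa_integral a x (fun x' => tr x' (cyl_omega u)))].

Definition trace_sol_inf (tr : X -> set (inf_word A) -> \bar R) : Prop :=
  [/\ sections_measurable (@S_inf A) tr,
      (forall x, tr x set0 = 0),
      (forall x, tr x [set inl [::]] = alpha x [set None]) /\
      (forall x a u, tr x [set inl (a :: u)] =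
                     Pa_integral a x (fun x' => tr x' [set inl u])),
      (forall x, tr x (cyl_inf [::]) = 1) &
      (forall x a u, tr x (cyl_inf (a :: u)) =
                     Pa_integral a x (fun x' => tr x' (cyl_inf u)))].

End trace_equations.

From HB Require Import structures.
From mathcomp Require Import all_boot all_order all_algebra.
From mathcomp Require Import all_classical all_reals all_analysis.
From mathcomp Require Import measurable_realfun.

(* Fix a state x.  Unfolding the trace equations forces tr(x)({u}) and tr(x)(C(u))
   to be iterated integrals s(u) and c(u) of the kernel along u, with c(eps) = 1 and
   s(u) + sum_a c(ua) <= c(u), with equality for a probability kernel.  These numbers
   lay out [0, 1) as a tree of half-open intervals: the cell of u, of length c(u),
   starts with a halting interval of length s(u), followed by the cells of the words
   ua.  Following the cells that contain a point y defines a map from [0, 1) to words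
   (finite if y lies in a halting interval, infinite otherwise), and the pushforward
   of Lebesgue measure along it (restricted to the halting points for finite traces)
   is a measure on sigma(S) extending tr(x).  Hence
   tr(x) is a pre-measure with the right total mass, and the extension is unique by
   the pi-lambda theorem, as S is closed under intersections and covered by countably
   many sets of finite measure. *)

Set Implicit Arguments.
Unset Strict Implicit.
Unset Printing Implicit Defensive.
Import Order.TTheory GRing.Theory Num.Theory.

Local Open Scope classical_set_scope.
Local Open Scope ring_scope.
Local Open Scope ereal_scope.

(** * Measures extending a set function on a generating family *)

Definition unique_prob_extension (R : realType) (W : Type) (S : set (set W))
    (t : set W -> \bar R) (prob : bool) : Prop :=
  [/\ (forall s, S s -> 0 <= t s <= 1),
      premeasure_on S t,
      sigma_finite_on S t &
      exists mu : set W -> \bar R,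
        [/\ measure_on <<s S >> mu,
            (forall s, S s -> mu s = t s),
            (forall nu, measure_on <<s S >> nu ->
               (forall s, S s -> nu s = t s) ->
               forall B, <<s S >> B -> nu B = mu B) &
            (if prob then mu setT = 1 else mu setT <= 1)]].

Section generated_measure.
Context (R : realType) (W : pointedType) (S : set (set W)).
Local Notation T := (g_sigma_algebraType S).

Lemma measure_on_measure (mu : {measure set T -> \bar R}) :
  measure_on <<s S >> (mu : set W -> \bar R).
Proof.
split=> [|s _|F mF tF]; [exact: measure0|exact: measure_ge0|].
apply: measure_semi_sigma_additive => //.
exact: (@bigcupT_measurable _ T).
Qed.

Section measure_of_measure_on.
Variable nu : set W -> \bar R.
Hypothesis nuS : measure_on <<s S >> nu.

(* [nu] only matters on the sigma-algebra; elsewhere any value, here [0], will do. *)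
Definition measure_of : set T -> \bar R :=
  fun B => if `[< <<s S >> B >] then nu B else 0.

Lemma measure_ofE B : <<s S >> B -> measure_of B = nu B.
Proof. by move=> SB; rewrite /measure_of; case: asboolP. Qed.

Let measure_of0 : measure_of set0 = 0.
Proof.
rewrite measure_ofE; first by case: nuS.
exact: (@measurable0 _ T).
Qed.

Let measure_of_ge0 B : 0 <= measure_of B.
Proof.
by rewrite /measure_of; case: asboolP => // SB; case: nuS => _ + _; exact.
Qed.

Let measure_of_sigma_additive : semi_sigma_additive measure_of.
Proof.
move=> F mF tF mU; rewrite measure_ofE //.
rewrite (_ : (fun n => _) = fun n => \sum_(0 <= i < n) nu (F i)).
  by case: nuS => _ _; exact.
by apply/funext => n; apply: eq_bigr => i _; rewrite measure_ofE //; exact: mF.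
Qed.

HB.instance Definition _ := isMeasure.Build _ T R measure_of
  measure_of0 measure_of_ge0 measure_of_sigma_additive.

Lemma measure_on_unique (mu : {measure set T -> \bar R}) (g : nat -> set W) :
  setI_closed S -> (forall n, S (g n)) -> \bigcup_n g n = setT ->
  (forall n, nu (g n) < +oo) -> (forall s, S s -> nu s = mu s) ->
  forall B, <<s S >> B -> nu B = mu B.
Proof.
move=> SI Sg gT gfin numu B SB.
have mS s : S s -> <<s S >> s by exact: sub_gen_smallest.
rewrite -(measure_ofE SB).
apply: (@measure_unique _ R T S g erefl SI Sg gT) => // [s Ss|n].
  by rewrite /= measure_ofE ?numu //; exact: mS.
by rewrite /= measure_ofE //; exact: mS.
Qed.

End measure_of_measure_on.

Lemma unique_prob_extension_of_measure (mu : {measure set T -> \bar R})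
    (t : set W -> \bar R) (prob : bool) (g : nat -> set W) :
  S set0 -> setI_closed S -> (forall n, S (g n)) -> \bigcup_n g n = setT ->
  (forall n, t (g n) < +oo) -> (forall s, S s -> mu s = t s) ->
  (if prob then mu setT = 1 else mu setT <= 1) ->
  unique_prob_extension S t prob.
Proof.
move=> S0 SI Sg gT tg mut mass.
have mS s : S s -> measurable (s : set T) by exact: sub_gen_smallest.
have muS := measure_on_measure mu.
have mu_le1 : mu setT <= 1 by case: prob mass => // ->.
split.
- move=> s Ss; rewrite -mut // measure_ge0 /=.
  by apply: le_trans mu_le1; apply: le_measure; rewrite ?inE //; exact: mS.
- split=> [|s Ss|F SF tF SU]; first by rewrite -mut // measure0.
    by rewrite -mut // measure_ge0.
  rewrite -mut // (_ : (fun n => _) = fun n => \sum_(0 <= k < n) mu (F k)).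
    by case: muS => _ _; apply => // n; exact: mS.
  by apply/funext => n; apply: eq_bigr => k _; rewrite mut.
- by exists g.
- exists mu; split => // nu nuS nut.
  apply: (measure_on_unique nuS SI Sg gT) => // [n|s Ss]; first by rewrite nut.
  by rewrite nut // mut.
Qed.

End generated_measure.

Section pushforward_lebesgue.
Context (R : realType) (W : pointedType) (S : set (set W)) (D : set R).
Hypothesis mD : measurable D.
Variable phi : R -> W.
Hypothesis mphiS : forall s, S s -> measurable (D `&` phi @^-1` s).
Local Notation T := (g_sigma_algebraType S).

Lemma measurable_pushforward (B : set T) :
  measurable B -> measurable (D `&` phi @^-1` B).
Proof.
have mphi : measurable_fun D (phi : R -> T).
  apply: (@measurability _ _ _ T D phi S erefl).
  by move=> _ [s Ss <-]; exact: mphiS.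
exact: mphi.
Qed.

Definition lebesgue_pushforward : set T -> \bar R :=
  fun B => lebesgue_measure (D `&` phi @^-1` B).

Let lebesgue_pushforward0 : lebesgue_pushforward set0 = 0.
Proof. by rewrite /lebesgue_pushforward preimage_set0 setI0 measure0. Qed.

Let lebesgue_pushforward_ge0 B : 0 <= lebesgue_pushforward B.
Proof. exact: measure_ge0. Qed.

Let lebesgue_pushforward_sigma_additive :
  semi_sigma_additive lebesgue_pushforward.
Proof.
move=> F mF tF mU.
rewrite /lebesgue_pushforward preimage_bigcup setI_bigcupr.
apply: measure_semi_sigma_additive => [n||].
- exact: measurable_pushforward.
- apply/trivIsetP => i j _ _ ij; rewrite setIACA setIid -preimage_setI.
  by move/trivIsetP : tF => /(_ i j Logic.I Logic.I ij) ->; rewrite preimage_set0 setI0.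
- by rewrite -setI_bigcupr -preimage_bigcup; exact: measurable_pushforward.
Qed.

HB.instance Definition _ := isMeasure.Build _ T R lebesgue_pushforward
  lebesgue_pushforward0 lebesgue_pushforward_ge0
  lebesgue_pushforward_sigma_additive.

Lemma unique_prob_extension_pushforward (t : set W -> \bar R) (prob : bool)
    (g : nat -> set W) :
  S set0 -> setI_closed S -> (forall n, S (g n)) -> \bigcup_n g n = setT ->
  (forall n, t (g n) < +oo) ->
  (forall s, S s -> lebesgue_measure (D `&` phi @^-1` s) = t s) ->
  (if prob then lebesgue_measure D = 1 else lebesgue_measure D <= 1) ->
  unique_prob_extension S t prob.
Proof.
move=> S0 SI Sg gT tg phit mass.
apply: (unique_prob_extension_of_measure (mu := lebesgue_pushforward)) => //.
rewrite /= /lebesgue_pushforward preimage_setT setIT.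
exact: mass.
Qed.

End pushforward_lebesgue.

(** * Coding words by nested intervals *)

Lemma exists_step_crossing (R : realType) (f : nat -> R) (y : R) n :
  (f 0%N <= y)%R -> (y < f n)%R ->
  exists2 k, (k < n)%N & (f k <= y)%R && (y < f k.+1)%R.
Proof.
elim: n => [f0y yf0|n IH f0y yfn].
  by have := le_lt_trans f0y yf0; rewrite ltxx.
have [fny|ynf] := leP (f n) y; first by exists n => //; rewrite fny yfn.
by have [k kn kP] := IH f0y ynf; exists k => //; exact: ltnW.
Qed.

Section interval_coding.
Local Open Scope ring_scope.
Context (R : realType) (A : finType) (c s : seq A -> R).
Hypothesis c_ge0 : forall u, 0 <= c u.
Hypothesis s_ge0 : forall u, 0 <= s u.
Hypothesis c_split : forall u, s u + \sum_(a : A) c (rcons u a) <= c u.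

Definition mass_before (u : seq A) (k : nat) : R :=
  \sum_(b : A | (enum_rank b < k)%N) c (rcons u b).

Lemma mass_before0 u : mass_before u 0 = 0.
Proof. by rewrite /mass_before big_pred0. Qed.

Lemma mass_before_card u : mass_before u #|A| = \sum_(b : A) c (rcons u b).
Proof. by apply: eq_bigl => b; rewrite ltn_ord. Qed.

Lemma mass_before_ge0 u k : 0 <= mass_before u k.
Proof. exact: sumr_ge0. Qed.

Lemma mass_before_mono u k k' : (k <= k')%N -> mass_before u k <= mass_before u k'.
Proof.
move=> kk'; rewrite [leRHS](bigID (fun b => (enum_rank b < k)%N)) /=.
rewrite (eq_bigl (fun b => (enum_rank b < k)%N)); first by rewrite lerDl sumr_ge0.
by move=> b; apply/andP/idP => [[]//|bk]; rewrite (leq_trans bk).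
Qed.

Lemma mass_before_rankS u a :
  mass_before u (enum_rank a).+1 = mass_before u (enum_rank a) + c (rcons u a).
Proof.
rewrite /mass_before (bigD1 a) //= addrC; congr (_ + _); apply: eq_bigl => b.
rewrite ltnS leq_eqVlt; have [->|ba] := eqVneq b a; first by rewrite ltnn eqxx.
by rewrite andbT (inj_eq val_inj) (inj_eq enum_rank_inj) (negbTE ba).
Qed.

Lemma s_le_c u : s u <= c u.
Proof. by apply: le_trans (c_split u); rewrite lerDl sumr_ge0. Qed.

(* The cells of the children [rcons u a] follow the halting interval of [u],
   in the order of [enum A]. *)
Fixpoint cell_start_rev (r : seq A) : R :=
  if r is a :: r' then
    cell_start_rev r' + s (rev r') + mass_before (rev r') (enum_rank a)
  else 0.

Definition cell_start (u : seq A) : R := cell_start_rev (rev u).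

Lemma cell_start_rcons u a :
  cell_start (rcons u a) = cell_start u + s u + mass_before u (enum_rank a).
Proof. by rewrite /cell_start rev_rcons /= revK. Qed.

Definition in_cell (u : seq A) (y : R) : bool :=
  (cell_start u <= y) && (y < cell_start u + c u).

Definition in_halt (u : seq A) (y : R) : bool :=
  (cell_start u <= y) && (y < cell_start u + s u).

Lemma in_halt_in_cell u y : in_halt u y -> in_cell u y.
Proof.
case/andP => uy yu; rewrite /in_cell uy (lt_le_trans yu) //.
by rewrite lerD2l s_le_c.
Qed.

Lemma in_cell_rcons u a y : in_cell (rcons u a) y -> in_cell u y.
Proof.
rewrite /in_cell cell_start_rcons => /andP[uy yu]; apply/andP; split.
  by apply: le_trans uy; rewrite -addrA lerDl addr_ge0 ?mass_before_ge0.
apply: (lt_le_trans yu); rewrite -!addrA lerD2l -mass_before_rankS.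
apply: le_trans (c_split u); rewrite lerD2l -mass_before_card.
exact: mass_before_mono.
Qed.

Lemma in_cell_rcons_inj u a b y :
  in_cell (rcons u a) y -> in_cell (rcons u b) y -> a = b.
Proof.
wlog ab : a b / (enum_rank a <= enum_rank b)%N.
  move=> wlog ya yb; have [ab|ba] := leqP (enum_rank a) (enum_rank b).
    exact: wlog ya yb.
  by symmetry; apply: wlog yb ya; exact: ltnW.
move: ab; rewrite leq_eqVlt => /orP[/eqP/val_inj/enum_rank_inj //|lt_ab].
rewrite /in_cell !cell_start_rcons => /andP[_ ya] /andP[yb _].
have := le_lt_trans yb ya; rewrite -!addrA ltrD2l ltrD2l -mass_before_rankS.
by rewrite ltNge mass_before_mono.
Qed.

Lemma in_halt_rcons u a y : in_halt u y -> ~~ in_cell (rcons u a) y.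
Proof.
rewrite /in_halt /in_cell cell_start_rcons => /andP[_ yu]; apply/negP.
case/andP=> uy _; have := le_lt_trans uy yu.
by rewrite ltNge lerDl mass_before_ge0.
Qed.

Lemma in_cell_take u k y : in_cell u y -> in_cell (take k u) y.
Proof.
rewrite -[in X in X -> _](cat_take_drop k u).
elim/last_ind: (drop k u) => [|v a IH]; first by rewrite cats0.
by rewrite -rcons_cat => /in_cell_rcons.
Qed.

Lemma in_cell_root u y : in_cell u y -> in_cell [::] y.
Proof. by move/(in_cell_take 0); rewrite take0. Qed.

Lemma in_cell_size_inj u v y :
  in_cell u y -> in_cell v y -> size u = size v -> u = v.
Proof.
elim/last_ind: u v => [|u a IH] v; first by case: v.
elim/last_ind: v => [|v b _] ua vb; rewrite !size_rcons // => -[uv].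
have eq_uv := IH v (in_cell_rcons ua) (in_cell_rcons vb) uv.
by rewrite -eq_uv in vb *; rewrite (in_cell_rcons_inj ua vb).
Qed.

Lemma in_cell_take_size u v y : in_cell u y -> in_cell v y ->
  (size u <= size v)%N -> take (size u) v = u.
Proof.
move=> uy vy uv; apply: (in_cell_size_inj (in_cell_take _ vy) uy).
exact: size_takel.
Qed.

Lemma in_halt_prefix u v y : in_halt v y -> in_cell u y -> prefix u v.
Proof.
move=> hv uy; have vy := in_halt_in_cell hv.
have [uv|vu] := leqP (size u) (size v).
  by rewrite prefixE (in_cell_take_size uy vy uv).
have x0 : A by case: u vu {uy} => [//|a _ _]; exact: a.
have := in_cell_take (size v).+1 uy.
rewrite (take_nth x0 vu) (in_cell_take_size vy uy (ltnW vu)).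
by move/negP: (in_halt_rcons (nth x0 u (size v)) hv).
Qed.

Lemma in_halt_inj u v y : in_halt u y -> in_halt v y -> u = v.
Proof.
move=> hu hv; have uy := in_halt_in_cell hu; have vy := in_halt_in_cell hv.
apply: (in_cell_size_inj uy vy); apply/eqP; rewrite eqn_leq.
by rewrite (size_prefix (in_halt_prefix hv uy)) (size_prefix (in_halt_prefix hu vy)).
Qed.

Definition halt_word (y : R) : option (seq A) :=
  if pselect (exists u, in_halt u y) is left ex then Some (xchoose ex) else None.

Lemma halt_wordP y u : halt_word y = Some u <-> in_halt u y.
Proof.
rewrite /halt_word; case: pselect => [ex|nex]; last first.
  by split=> // hu; case: nex; exists u.
have hx := xchooseP ex; split=> [[<-] //|hu].
by rewrite (in_halt_inj hx hu).
Qed.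

Lemma halt_word_None y u : halt_word y = None -> ~~ in_halt u y.
Proof. by move=> hN; apply/negP => /halt_wordP; rewrite hN. Qed.

Definition cell_word (y : R) (n : nat) : seq A :=
  if pselect (exists u, (size u == n) && in_cell u y) is left ex then xchoose ex
  else [::].

Lemma cell_wordE u y : in_cell u y -> cell_word y (size u) = u.
Proof.
move=> uy; rewrite /cell_word; case: pselect => [ex|]; last first.
  by case; exists u; rewrite eqxx.
by have /andP[/eqP sz xy] := xchooseP ex; exact: in_cell_size_inj xy uy sz.
Qed.

Section exact_split.
Hypothesis c_exact : forall u, s u + \sum_(a : A) c (rcons u a) = c u.

Lemma in_cell_child u y : in_cell u y -> ~~ in_halt u y ->
  exists a, in_cell (rcons u a) y.
Proof.
case/andP=> uy yu; rewrite /in_halt uy /= -leNgt => hy.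
pose f k := cell_start u + s u + mass_before u k.
have f0 : f 0%N <= y by rewrite /f mass_before0 addr0.
have fA : y < f #|A| by rewrite /f mass_before_card -addrA c_exact.
have [k kA /andP[fk yfk]] := exists_step_crossing f0 fA.
set a := enum_val (Ordinal kA).
have ka : enum_rank a = k :> nat by rewrite /a enum_valK.
exists a; rewrite /in_cell cell_start_rcons ka fk /=.
by rewrite -addrA -ka -mass_before_rankS ka.
Qed.

Lemma cell_word_spec y : in_cell [::] y -> halt_word y = None ->
  forall n, size (cell_word y n) = n /\ in_cell (cell_word y n) y.
Proof.
move=> y0 hN; elim=> [|n [sz ny]]; first by rewrite (cell_wordE y0).
have [a ay] := in_cell_child ny (halt_word_None _ hN).
by rewrite -sz -(size_rcons _ a) (cell_wordE ay) size_rcons sz.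
Qed.

Definition cell_path (a : A) (y : R) : nat -> A :=
  fun n => nth a (cell_word y n.+1) n.

Lemma mkseq_cell_path a y : in_cell [::] y -> halt_word y = None ->
  forall n, mkseq (cell_path a y) n = cell_word y n.
Proof.
move=> y0 hN n; have spec := cell_word_spec y0 hN.
apply: (@eq_from_nth _ a); first by rewrite size_mkseq (spec n).1.
move=> i; rewrite size_mkseq => i_n; rewrite nth_mkseq // /cell_path.
have [szi iy] := spec i.+1; have [szn ny] := spec n.
by rewrite -(in_cell_take_size iy ny) ?szi ?szn // nth_take.
Qed.

Lemma cyl_omega_cell_path a y u : in_cell [::] y -> halt_word y = None ->
  cyl_omega u (cell_path a y) <-> in_cell u y.
Proof.
move=> y0 hN; rewrite /cyl_omega /= mkseq_cell_path //.
split=> [<-|uy]; [exact: (cell_word_spec y0 hN _).2|exact: cell_wordE].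
Qed.

(* The last branch is junk: for [y] in the unit cell, [cell_word y 1] is a
   letter as soon as [y] is in no halting interval. *)
Definition walk (y : R) : inf_word A :=
  if halt_word y is Some u then inl u
  else if cell_word y 1 is a :: _ then inr (cell_path a y) else inl [::].

Lemma walk_halt y u : in_halt u y -> walk y = inl u.
Proof. by rewrite /walk => /halt_wordP ->. Qed.

Lemma walk_nohalt y : in_cell [::] y -> halt_word y = None ->
  exists a, walk y = inr (cell_path a y).
Proof.
move=> y0 hN; rewrite /walk hN; have [] := cell_word_spec y0 hN 1.
by case: (cell_word y 1) => [//|a w] _ _; exists a.
Qed.

Lemma walk_inl y u : in_cell [::] y -> walk y = inl u <-> in_halt u y.
Proof.
move=> y0; split; last exact: walk_halt.
case hy: (halt_word y) => [v|].
  by rewrite /walk hy => -[<-]; exact/halt_wordP.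
by have [a ->] := walk_nohalt y0 hy.
Qed.

Lemma cyl_inf_walk y u : in_cell [::] y -> cyl_inf u (walk y) <-> in_cell u y.
Proof.
move=> y0; case hy: (halt_word y) => [v|]; last first.
  by have [a ->] := walk_nohalt y0 hy; exact: cyl_omega_cell_path.
move/halt_wordP: hy => hv; rewrite (walk_halt hv) /=.
split; last exact: in_halt_prefix.
rewrite prefixE => /eqP <-; apply: in_cell_take; exact: in_halt_in_cell.
Qed.

End exact_split.

End interval_coding.

(** * Traces along words *)

Section kernel_traces.
Context (R : realType) (d : measure_display) (X : measurableType d)
        (A : finType).
Variable alpha : R.-spker X ~> pts_space A X.
Local Notation Y := (pts_space A X).

Lemma measurable_pts_space (S : set Y) :
  (forall a, measurable [set x : X | S (Some (a, x))]) -> measurable S.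
Proof. exact. Qed.

Lemma measurable_letter_set (a : A) : measurable (letter_set a : set Y).
Proof.
apply: measurable_pts_space => b; have [->|ba] := eqVneq b a.
  rewrite [X in measurable X](_ : _ = setT) //.
  by apply/seteqP; split=> // x _; exists x.
rewrite [X in measurable X](_ : _ = set0) //.
by apply/seteqP; split=> // x [x' [eb _]]; move: ba; rewrite eb eqxx.
Qed.

Lemma measurable_None : measurable ([set None] : set Y).
Proof.
apply: measurable_pts_space => b.
by rewrite [X in measurable X](_ : _ = set0) //; apply/seteqP; split.
Qed.

Lemma measurable_lift_X (f : X -> \bar R) :
  measurable_fun setT f -> measurable_fun (setT : set Y) (lift_X f).
Proof.
move=> mf _ B mB; apply: measurable_pts_space => b.
rewrite [X in measurable X](_ : _ = f @^-1` B `&` setT).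
  by rewrite setIC; exact: mf.
by apply/seteqP; split=> x /=; rewrite ?setIT ?setTI //; move=> [].
Qed.

Lemma lift_X_ge0 (f : X -> \bar R) :
  (forall x, 0 <= f x) -> forall y : Y, 0 <= lift_X f y.
Proof. by move=> f0 [[a x]|] /=. Qed.

Section Pa_integral_properties.
Variable a : A.
Implicit Types f g : X -> \bar R.

Let measurable_lift_letter f :
  measurable_fun setT f -> measurable_fun (letter_set a) (lift_X f).
Proof. by move/measurable_lift_X; apply: measurable_funS. Qed.

Lemma measurable_Pa_integral f : measurable_fun setT f -> (forall x, 0 <= f x) ->
  measurable_fun setT (fun x => Pa_integral alpha a x f).
Proof.
move=> mf f0; rewrite /Pa_integral; under eq_fun do rewrite integral_mkcond.
apply: (measurable_fun_integral_finite_kernel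
  (fun z : X * Y => ((lift_X f) \_ (letter_set a)) z.2) alpha).
  by move=> [x y] /=; rewrite /patch; case: ifP => // _; exact: lift_X_ge0.
apply: measurableT_comp; last exact: measurable_snd.
apply/(measurable_restrictT _ (measurable_letter_set a)).
exact: measurable_lift_letter.
Qed.

Lemma Pa_integral_ge0 x f : (forall x, 0 <= f x) -> 0 <= Pa_integral alpha a x f.
Proof. by move=> f0; apply: integral_ge0 => y _; exact: lift_X_ge0. Qed.

Lemma le_Pa_integral x f g : measurable_fun setT f -> measurable_fun setT g ->
  (forall x, 0 <= f x) -> (forall x, f x <= g x) ->
  Pa_integral alpha a x f <= Pa_integral alpha a x g.
Proof.
move=> mf mg f0 fg; apply: ge0_le_integral.
- exact: measurable_letter_set.
- by move=> y _; exact: lift_X_ge0.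
- exact: measurable_lift_letter.
- exact: measurable_lift_letter.
- by move=> [[b z]|] _ /=.
Qed.

Lemma Pa_integralD x f g : measurable_fun setT f -> measurable_fun setT g ->
  (forall x, 0 <= f x) -> (forall x, 0 <= g x) ->
  Pa_integral alpha a x (fun x' => f x' + g x') =
  Pa_integral alpha a x f + Pa_integral alpha a x g.
Proof.
move=> mf mg f0 g0; rewrite /Pa_integral -ge0_integralD //.
- by apply: eq_integral => -[[b z]|] _ /=; rewrite ?adde0.
- exact: measurable_letter_set.
- by move=> y _; exact: lift_X_ge0.
- exact: measurable_lift_letter.
- by move=> y _; exact: lift_X_ge0.
- exact: measurable_lift_letter.
Qed.

Lemma Pa_integral_sum x (I : Type) (r : seq I) (F : I -> X -> \bar R) :
  (forall i, measurable_fun setT (F i)) -> (forall i x, 0 <= F i x) ->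
  Pa_integral alpha a x (fun x' => \sum_(i <- r) F i x') =
  \sum_(i <- r) Pa_integral alpha a x (F i).
Proof.
move=> mF F0; rewrite /Pa_integral -ge0_integral_sum //.
- by apply: eq_integral => -[[b z]|] _ //=; rewrite big1.
- exact: measurable_letter_set.
- by move=> i; exact: measurable_lift_letter.
- by move=> i y _; exact: lift_X_ge0.
Qed.

Lemma Pa_integral1 x : Pa_integral alpha a x (fun _ => 1) = alpha x (letter_set a).
Proof.
rewrite /Pa_integral (eq_integral (fun _ => 1)) => [|y].
  by rewrite integral_cst ?mul1e //; exact: measurable_letter_set.
by rewrite inE => -[x' ->].
Qed.

End Pa_integral_properties.

Lemma measure_letter_sets x (r : seq A) : uniq r ->
  alpha x (\big[setU/set0]_(a <- r) letter_set a) =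
  \sum_(a <- r) alpha x (letter_set a).
Proof.
elim: r => [|a r IH]; first by rewrite !big_nil measure0.
move=> /= /andP[ar ur]; rewrite !big_cons measureU; first by congr (_ + _); exact: IH.
- exact: measurable_letter_set.
- by apply: bigsetU_measurable => b _; exact: measurable_letter_set.
apply/seteqP; split=> // _ [[x' ->]].
rewrite -bigcup_seq => -[b /= br [x'' [eb _]]].
by move: ar; rewrite eb br.
Qed.

Lemma measure_pts_split x :
  alpha x setT = alpha x [set None] + \sum_(a : A) alpha x (letter_set a).
Proof.
rewrite -measure_letter_sets ?index_enum_uniq // -measureU.
- congr (alpha x _); apply/seteqP; split=> // -[[a x']|] _; [right|by left].
  by rewrite -bigcup_seq; exists a; [rewrite /= mem_index_enum|exists x'].
- exact: measurable_None.
- by apply: bigsetU_measurable => b _; exact: measurable_letter_set.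
by apply/seteqP; split=> // _ [->]; rewrite -bigcup_seq => -[b _ []].
Qed.

Fixpoint word_trace (f0 : X -> \bar R) (u : seq A) : X -> \bar R :=
  if u is a :: u' then fun x => Pa_integral alpha a x (word_trace f0 u') else f0.

Lemma word_trace_eqnsP (t : seq A -> X -> \bar R) (f0 : X -> \bar R) :
  (forall u x, t u x = word_trace f0 u x) <->
  (forall x, t [::] x = f0 x) /\
  (forall a u x, t (a :: u) x = Pa_integral alpha a x (t u)).
Proof.
split=> [tE|[t0 tS]]; last first.
  elim=> [|a u IH] x /=; first exact: t0.
  by rewrite tS; congr Pa_integral; apply/funext => x'; exact: IH.
split=> [x|a u x]; first by rewrite tE.
by rewrite !tE /=; congr Pa_integral; apply/funext => x'; rewrite tE.
Qed.

Lemma word_trace0 u x : word_trace (fun _ => 0) u x = 0.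
Proof.
elim: u x => [|a u IH] x //=; rewrite (_ : word_trace _ u = fun _ => 0).
  by rewrite /Pa_integral integral0_eq // => -[[]|].
by apply/funext => x'; exact: IH.
Qed.

Lemma word_trace_ge0 (f0 : X -> \bar R) :
  (forall x, 0 <= f0 x) -> forall u x, 0 <= word_trace f0 u x.
Proof.
by move=> f00; elim=> [|a u IH] x /=; [exact: f00|exact: Pa_integral_ge0].
Qed.

Lemma measurable_word_trace (f0 : X -> \bar R) u :
  measurable_fun setT f0 -> (forall x, 0 <= f0 x) -> measurable_fun setT (word_trace f0 u).
Proof.
move=> mf0 f00; elim: u => [|a u IH] //=.
by apply: measurable_Pa_integral => //; exact: word_trace_ge0.
Qed.

Lemma le_word_trace (f g : X -> \bar R) u x :
  measurable_fun setT f -> measurable_fun setT g ->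
  (forall x, 0 <= f x) -> (forall x, f x <= g x) -> word_trace f u x <= word_trace g u x.
Proof.
move=> mf mg f0 fg; have g0 x' : 0 <= g x' := le_trans (f0 x') (fg x').
elim: u x => [|a u IH] x //=.
by apply: le_Pa_integral => //;
  [exact: measurable_word_trace|exact: measurable_word_trace|exact: word_trace_ge0].
Qed.

Lemma word_traceD (f g : X -> \bar R) u x :
  measurable_fun setT f -> measurable_fun setT g ->
  (forall x, 0 <= f x) -> (forall x, 0 <= g x) ->
  word_trace (fun x => f x + g x) u x = word_trace f u x + word_trace g u x.
Proof.
move=> mf mg f0 g0; elim: u x => [|a u IH] x //=.
rewrite -Pa_integralD;
  [|exact: measurable_word_trace|exact: measurable_word_trace|exact: word_trace_ge0..].
by congr Pa_integral; apply/funext => x'; exact: IH.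
Qed.

Lemma word_trace_sum (I : Type) (r : seq I) (F : I -> X -> \bar R) u x :
  (forall i, measurable_fun setT (F i)) -> (forall i x, 0 <= F i x) ->
  word_trace (fun x => \sum_(i <- r) F i x) u x = \sum_(i <- r) word_trace (F i) u x.
Proof.
move=> mF F0; elim: u x => [|a u IH] x //=.
rewrite -Pa_integral_sum => [||i]; last exact: word_trace_ge0.
  by congr Pa_integral; apply/funext => x'; exact: IH.
by move=> i; exact: measurable_word_trace.
Qed.

Lemma word_trace_rcons (f0 : X -> \bar R) u a :
  word_trace f0 (rcons u a) = word_trace (fun x => Pa_integral alpha a x f0) u.
Proof. by elim: u => [|b u IH] //=; rewrite IH. Qed.

(* The values tr(x)({u}) and tr(x)(C(u)) forced by the trace equations. *)
Definition halt_mass : seq A -> X -> \bar R := word_trace (fun x => alpha x [set None]).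
Definition cyl_mass : seq A -> X -> \bar R := word_trace (fun _ => 1).

Lemma halt_mass_ge0 u x : 0 <= halt_mass u x.
Proof. by apply: word_trace_ge0 => x'; exact: measure_ge0. Qed.

Lemma cyl_mass_ge0 u x : 0 <= cyl_mass u x.
Proof. by apply: word_trace_ge0 => x'; exact: lee01. Qed.

Lemma measurable_halt_mass u : measurable_fun setT (halt_mass u).
Proof.
apply: measurable_word_trace => [|x]; last exact: measure_ge0.
exact: measurable_kernel alpha _ measurable_None.
Qed.

Lemma measurable_cyl_mass u : measurable_fun setT (cyl_mass u).
Proof.
by apply: measurable_word_trace => [|x]; [exact: measurable_cst|exact: lee01].
Qed.

Lemma cyl_mass_rcons u a :
  cyl_mass (rcons u a) = word_trace (fun x => alpha x (letter_set a)) u.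
Proof.
by rewrite /cyl_mass word_trace_rcons; under eq_fun do rewrite Pa_integral1.
Qed.

Lemma halt_mass_split u x :
  halt_mass u x + \sum_(a : A) cyl_mass (rcons u a) x =
  word_trace (fun x => alpha x setT) u x.
Proof.
have mletter a : measurable_fun setT (fun x => alpha x (letter_set a)).
  exact: measurable_kernel alpha _ (measurable_letter_set a).
rewrite (_ : (fun x => alpha x setT) =
  fun x => alpha x [set None] + \sum_(a : A) alpha x (letter_set a)); last first.
  by apply/funext => x'; exact: measure_pts_split.
rewrite word_traceD; last 4 first.
- exact: measurable_kernel alpha _ measurable_None.
- by apply: emeasurable_sum => a; exact: mletter.
- by move=> x'; exact: measure_ge0.
- by move=> x'; apply: sume_ge0 => a _; exact: measure_ge0.
rewrite word_trace_sum; [|exact: mletter|by move=> a x'; exact: measure_ge0].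
by congr (_ + _); apply: eq_bigr => a _; rewrite cyl_mass_rcons.
Qed.

Lemma halt_mass_split_le u x :
  halt_mass u x + \sum_(a : A) cyl_mass (rcons u a) x <= cyl_mass u x.
Proof.
rewrite halt_mass_split; apply: le_word_trace => [|||x'].
- exact: measurable_kernel alpha _ measurableT.
- exact: measurable_cst.
- by move=> x'; exact: measure_ge0.
- exact: sprob_kernel_le1.
Qed.

Lemma halt_mass_split_prob (alpha_prob : forall x, alpha x setT = 1) u x :
  halt_mass u x + \sum_(a : A) cyl_mass (rcons u a) x = cyl_mass u x.
Proof. by rewrite halt_mass_split; congr word_trace; apply/funext => x'. Qed.

Lemma cyl_mass_le1 u x : cyl_mass u x <= 1.
Proof.
elim/last_ind: u => [//|u a IH]; apply: le_trans IH.
apply: le_trans (halt_mass_split_le u x).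
rewrite (bigD1 a) //= addeCA leeDl // adde_ge0 ?halt_mass_ge0 //.
by apply: sume_ge0 => b _; exact: cyl_mass_ge0.
Qed.

Lemma halt_mass_le1 u x : halt_mass u x <= 1.
Proof.
apply: le_trans (cyl_mass_le1 u x); apply: le_trans (halt_mass_split_le u x).
by rewrite leeDl // sume_ge0 // => a _; exact: cyl_mass_ge0.
Qed.

Lemma cyl_mass_fin_num u x : cyl_mass u x \is a fin_num.
Proof.
by rewrite ge0_fin_numE ?cyl_mass_ge0 // (le_lt_trans (cyl_mass_le1 u x)) ?ltey.
Qed.

Lemma halt_mass_fin_num u x : halt_mass u x \is a fin_num.
Proof.
by rewrite ge0_fin_numE ?halt_mass_ge0 // (le_lt_trans (halt_mass_le1 u x)) ?ltey.
Qed.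

Definition cyl_len (x : X) (u : seq A) : R := fine (cyl_mass u x).
Definition halt_len (x : X) (u : seq A) : R := fine (halt_mass u x).

Lemma cyl_lenE x u : (cyl_len x u)%:E = cyl_mass u x.
Proof. exact/fineK/cyl_mass_fin_num. Qed.

Lemma halt_lenE x u : (halt_len x u)%:E = halt_mass u x.
Proof. exact/fineK/halt_mass_fin_num. Qed.

Lemma cyl_len_ge0 x u : (0 <= cyl_len x u)%R.
Proof. by rewrite -lee_fin cyl_lenE cyl_mass_ge0. Qed.

Lemma halt_len_ge0 x u : (0 <= halt_len x u)%R.
Proof. by rewrite -lee_fin halt_lenE halt_mass_ge0. Qed.

Lemma cyl_len_nil x : cyl_len x [::] = 1%R.
Proof. by []. Qed.

Lemma cyl_len_split x u :
  (halt_len x u + \sum_(a : A) cyl_len x (rcons u a) <= cyl_len x u)%R.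
Proof.
rewrite -lee_fin EFinD -sumEFin halt_lenE cyl_lenE.
under eq_bigr do rewrite cyl_lenE.
exact: halt_mass_split_le.
Qed.

Lemma cyl_len_split_prob (alpha_prob : forall x, alpha x setT = 1) x u :
  (halt_len x u + \sum_(a : A) cyl_len x (rcons u a))%R = cyl_len x u.
Proof.
apply: EFin_inj; rewrite EFinD -sumEFin halt_lenE cyl_lenE.
under eq_bigr do rewrite cyl_lenE.
exact: halt_mass_split_prob.
Qed.

End kernel_traces.

(** * The four types of systems *)

Section trace_conclusion_pushforward.
Context (R : realType) (X : Type) (W : pointedType) (S : set (set W))
        (Sol : (X -> set W -> \bar R) -> Prop) (prob : bool).
Variables (D : X -> set R) (phi : X -> R -> W) (g : nat -> set W).
Hypotheses (S0 : S set0) (SI : setI_closed S).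
Hypotheses (Sg : forall n, S (g n)) (gT : \bigcup_n g n = setT).
Hypothesis mD : forall x, measurable (D x).
Hypothesis mphi : forall x s, S s -> measurable (D x `&` phi x @^-1` s).
Hypothesis massD : forall x,
  if prob then lebesgue_measure (D x) = 1 else lebesgue_measure (D x) <= 1.
Hypothesis Sol_pushforward :
  Sol (fun x B => lebesgue_measure (D x `&` phi x @^-1` B)).
Hypothesis Sol_eq : forall tr, Sol tr ->
  forall x s, S s -> tr x s = lebesgue_measure (D x `&` phi x @^-1` s).

Lemma trace_conclusion_pushforward : trace_conclusion S Sol prob.
Proof.
split; first by eexists; exact: Sol_pushforward.
  by move=> tr1 tr2 h1 h2 x s Ss; rewrite !Sol_eq.
move=> tr htr x; have D_le1 : lebesgue_measure (D x) <= 1.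
  by have := massD x; case: prob => // ->.
apply: (unique_prob_extension_pushforward (mD x) (mphi x) S0 SI Sg gT).
- move=> n; rewrite Sol_eq //; apply: le_lt_trans (le_lt_trans D_le1 (ltey _)).
  by apply: le_measure; rewrite ?inE; [exact: mphi|exact: mD|move=> y []].
- by move=> s Ss; rewrite Sol_eq.
- exact: massD.
Qed.

End trace_conclusion_pushforward.

Lemma lebesgue_measure_Ico_len (R : realType) (a l : R) : (0 <= l)%R ->
  lebesgue_measure [set y : R | (a <= y)%R && (y < a + l)%R] = l%:E.
Proof.
move=> l0; rewrite (_ : [set y | _] = [set` `[a, a + l[%R]); last first.
  by apply/seteqP; split => y /=; rewrite in_itv.
rewrite lebesgue_measure_itv /= lte_fin ltrDl.
have [->|l_gt0] := eqVneq l 0%R; first by rewrite ltxx.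
by rewrite lt_def l_gt0 l0 -EFinB addrC addKr.
Qed.

Lemma measurable_Ico_len (R : realType) (a l : R) :
  measurable [set y : R | (a <= y)%R && (y < a + l)%R].
Proof.
rewrite (_ : [set y | _] = [set` `[a, a + l[%R]); first exact: measurable_itv.
by apply/seteqP; split => y /=; rewrite in_itv.
Qed.

Section cell_measure.
Context (R : realType) (A : finType) (c s : seq A -> R) (u : seq A).

Lemma measurable_in_cell : measurable [set y | in_cell c s u y].
Proof. exact: measurable_Ico_len. Qed.

Lemma measurable_in_halt : measurable [set y | in_halt c s u y].
Proof. exact: measurable_Ico_len. Qed.

Lemma lebesgue_in_cell : (0 <= c u)%R ->
  lebesgue_measure [set y | in_cell c s u y] = (c u)%:E.
Proof. exact: lebesgue_measure_Ico_len. Qed.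

Lemma lebesgue_in_halt : (0 <= s u)%R ->
  lebesgue_measure [set y | in_halt c s u y] = (s u)%:E.
Proof. exact: lebesgue_measure_Ico_len. Qed.

End cell_measure.

Lemma setI1_eq (T : Type) (p : T) (B : set T) :
  [set p] `&` B = set0 \/ [set p] `&` B = [set p].
Proof.
have [Bp|nBp] := pselect (B p); [right|left]; apply/seteqP; split=> y //=.
- by case.
- by move=> ->.
- by case=> -> /nBp.
Qed.

Section cylinders.
Context (A : finType) (V : Type) (pre : V -> nat -> seq A).
Hypothesis take_pre : forall v n m, (n <= m)%N -> take n (pre v m) = pre v n.

Definition pre_cyl (u : seq A) : set V := [set v | pre v (size u) = u].

Lemma pre_cyl_sub u u' : (size u <= size u')%N ->
  pre_cyl u `&` pre_cyl u' !=set0 -> pre_cyl u' `<=` pre_cyl u.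
Proof.
move=> uu' [v [vu vu']] w wu'; rewrite /pre_cyl /= in vu vu' wu' *.
by rewrite -(take_pre w uu') wu' -vu' take_pre.
Qed.

Lemma pre_cylI u u' : pre_cyl u `&` pre_cyl u' = set0 \/
  pre_cyl u `&` pre_cyl u' = pre_cyl u \/ pre_cyl u `&` pre_cyl u' = pre_cyl u'.
Proof.
have [ne|/nonemptyPn] := pselect (pre_cyl u `&` pre_cyl u' !=set0); last by left.
right; have [le_uu'|/ltnW le_u'u] := leqP (size u) (size u').
  by right; apply/setIidr/pre_cyl_sub.
by left; apply/setIidl/pre_cyl_sub => //; rewrite setIC.
Qed.

End cylinders.

Lemma take_mkseq (T : Type) (f : nat -> T) n m : (n <= m)%N ->
  take n (mkseq f m) = mkseq f n.
Proof. by move=> nm; rewrite -map_take take_iota (minn_idPl nm). Qed.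

Lemma cyl_omegaE (A : finType) (u : seq A) : cyl_omega u = pre_cyl (@mkseq A) u.
Proof. by []. Qed.

Definition inf_word_prefix (A : finType) (w : inf_word A) (n : nat) : seq A :=
  match w with inl v => take n v | inr v => mkseq v n end.

Lemma take_inf_word_prefix (A : finType) (w : inf_word A) n m : (n <= m)%N ->
  take n (inf_word_prefix w m) = inf_word_prefix w n.
Proof.
by case: w => v nm /=; [rewrite -take_min (minn_idPl nm)|exact: take_mkseq].
Qed.

Lemma cyl_infE (A : finType) (u : seq A) : cyl_inf u = pre_cyl (@inf_word_prefix A) u.
Proof.
by apply/seteqP; split=> -[v|v] /=; rewrite /pre_cyl /= ?prefixE //; [move/eqP|move=> ->].
Qed.

Lemma setI_closed_star (A : finType) : setI_closed (@S_star A).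
Proof.
move=> B C [->|[u ->]]; first by rewrite set0I; left.
by move=> _; case: (setI1_eq u C) => ->; [left|right; exists u].
Qed.

Lemma setI_closed_omega (A : finType) : setI_closed (@S_omega A).
Proof.
move=> B C [->|[u ->]]; first by rewrite set0I; left.
move=> [->|[v ->]]; first by rewrite setI0; left.
rewrite !cyl_omegaE.
by case: (pre_cylI (@take_mkseq A) u v) => [|[]] ->; [left|right; exists u|right; exists v].
Qed.

Lemma setI_closed_inf (A : finType) : setI_closed (@S_inf A).
Proof.
move=> B C [->|[[u ->]|[u ->]]]; first by rewrite set0I; left.
  by move=> _; case: (setI1_eq (inl u) C) => ->; [left|right; left; exists u].
move=> [->|[[v ->]|[v ->]]]; first by rewrite setI0; left.
  by rewrite setIC; case: (setI1_eq (inl v) (cyl_inf u)) => ->; [left|right; left; exists v].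
rewrite !cyl_infE; case: (pre_cylI (@take_inf_word_prefix A) u v) => [|[]] ->.
- by left.
- by right; right; exists u; rewrite cyl_infE.
- by right; right; exists v; rewrite cyl_infE.
Qed.

Section star_case.
Context (R : realType) (d : measure_display) (X : measurableType d) (A : finType).
Variable alpha : R.-spker X ~> pts_space A X.

Definition finite_word := seq A.
HB.instance Definition _ := Choice.copy finite_word (seq A).
HB.instance Definition _ := isPointed.Build finite_word [::].

Section fixed_state.
Variable x : X.
Local Notation c := (cyl_len alpha x).
Local Notation s := (halt_len alpha x).
Let c_ge0 := cyl_len_ge0 alpha x.
Let s_ge0 := halt_len_ge0 alpha x.
Let c_split := cyl_len_split alpha x.

Definition halt_domain : set R := \bigcup_(u : seq A) [set y | in_halt c s u y].

Definition halted_word (y : R) : finite_word :=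
  if halt_word c s y is Some u then u else [::].

Lemma measurable_halt_domain : measurable halt_domain.
Proof.
apply: countable_bigcupT_measurable => [|u]; first exact: countableP.
exact: measurable_in_halt.
Qed.

Lemma halt_domain_le1 : lebesgue_measure halt_domain <= 1.
Proof.
rewrite -(cyl_len_nil alpha x) -(lebesgue_in_cell s) //.
apply: le_measure; rewrite ?inE; [exact: measurable_halt_domain|exact: measurable_in_cell|].
by move=> y [u _ /(in_halt_in_cell c_ge0 c_split)/(in_cell_root c_ge0 s_ge0 c_split)].
Qed.

Lemma halt_domain_halted_word u :
  halt_domain `&` halted_word @^-1` [set u] = [set y | in_halt c s u y].
Proof.
apply/seteqP; split=> y /=.
  move=> [[v _ hv]]; rewrite /halted_word.
  by rewrite ((halt_wordP c_ge0 s_ge0 c_split _ _).2 hv) => <-.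
move=> hu; split; first by exists u.
by rewrite /halted_word ((halt_wordP c_ge0 s_ge0 c_split _ _).2 hu).
Qed.

Lemma lebesgue_halted_word u :
  lebesgue_measure (halt_domain `&` halted_word @^-1` [set u]) = halt_mass alpha u x.
Proof. by rewrite halt_domain_halted_word lebesgue_in_halt // halt_lenE. Qed.

End fixed_state.

Lemma trace_sol_starP tr : trace_sol_star alpha tr ->
  forall u x, tr x [set u] = halt_mass alpha u x.
Proof. by case=> _ _ t0 tS; apply/(word_trace_eqnsP alpha (fun u x => tr x [set u])). Qed.

Lemma trace_conclusion_star : trace_conclusion (@S_star A) (trace_sol_star alpha) false.
Proof.
pose g n : set finite_word := if unpickle n is Some u then [set u] else set0.
apply: (@trace_conclusion_pushforward _ _ _ (@S_star A : set (set finite_word))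
  _ _ halt_domain halted_word g).
- by left.
- exact: setI_closed_star.
- by move=> n; rewrite /g; case: (unpickle n) => [u|]; [right; exists u|left].
- by apply/seteqP; split=> // u _; exists (pickle u) => //; rewrite /g pickleK.
- exact: measurable_halt_domain.
- move=> x _ [->|[u ->]]; first by rewrite preimage_set0 setI0.
  rewrite halt_domain_halted_word; exact: measurable_in_halt.
- exact: halt_domain_le1.
- split.
  + move=> _ [->|[u ->]].
      by under eq_fun do rewrite preimage_set0 setI0 measure0; exact: measurable_cst.
    by under eq_fun do rewrite lebesgue_halted_word; exact: measurable_halt_mass.
  + by move=> x; rewrite preimage_set0 setI0 measure0.
  + by move=> x; rewrite lebesgue_halted_word.
  + move=> x a u; rewrite lebesgue_halted_word /=; congr Pa_integral.
    by apply/funext => x'; rewrite lebesgue_halted_word.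
- move=> tr htr x _ [->|[u ->]].
    by rewrite preimage_set0 setI0 measure0; case: htr => _ ->.
  by rewrite lebesgue_halted_word (trace_sol_starP htr).
Qed.

End star_case.

Section inf_case.
Context (R : realType) (d : measure_display) (X : measurableType d) (A : finType).
Variable alpha : R.-pker X ~> pts_space A X.

Definition any_word := inf_word A.
HB.instance Definition _ := Choice.copy any_word (inf_word A).
HB.instance Definition _ := isPointed.Build any_word (inl [::]).

Section fixed_state.
Variable x : X.
Local Notation c := (cyl_len alpha x).
Local Notation s := (halt_len alpha x).
Let c_ge0 := cyl_len_ge0 alpha x.
Let s_ge0 := halt_len_ge0 alpha x.
Let c_split := cyl_len_split alpha x.
Let c_exact := cyl_len_split_prob (@prob_kernel _ _ _ _ _ alpha) x.

Definition walk_state : R -> any_word := walk c s.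

Lemma walk_state_cyl u :
  [set y | in_cell c s [::] y] `&` walk_state @^-1` cyl_inf u = [set y | in_cell c s u y].
Proof.
apply/seteqP; split=> y /=.
  by case=> y0 /(cyl_inf_walk c_ge0 s_ge0 c_split c_exact u y0).
move=> uy; have y0 := in_cell_root c_ge0 s_ge0 c_split uy.
by split=> //; apply/(cyl_inf_walk c_ge0 s_ge0 c_split c_exact u y0).
Qed.

Lemma walk_state_halt u :
  [set y | in_cell c s [::] y] `&` walk_state @^-1` [set inl u] = [set y | in_halt c s u y].
Proof.
apply/seteqP; split=> y /=.
  by case=> y0 /(walk_inl c_ge0 s_ge0 c_split c_exact u y0).
move=> hu; have y0 := in_cell_root c_ge0 s_ge0 c_split (in_halt_in_cell c_ge0 c_split hu).
by split=> //; apply/(walk_inl c_ge0 s_ge0 c_split c_exact u y0).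
Qed.

Lemma lebesgue_walk_state_cyl u : lebesgue_measure
  ([set y | in_cell c s [::] y] `&` walk_state @^-1` cyl_inf u) = cyl_mass alpha u x.
Proof. by rewrite walk_state_cyl lebesgue_in_cell // cyl_lenE. Qed.

Lemma lebesgue_walk_state_halt u : lebesgue_measure
  ([set y | in_cell c s [::] y] `&` walk_state @^-1` [set inl u]) = halt_mass alpha u x.
Proof. by rewrite walk_state_halt lebesgue_in_halt // halt_lenE. Qed.

End fixed_state.

Lemma trace_sol_infP tr : trace_sol_inf alpha tr ->
  (forall u x, tr x [set inl u] = halt_mass alpha u x) /\
  (forall u x, tr x (cyl_inf u) = cyl_mass alpha u x).
Proof.
case=> _ _ [t0 tS] c0 cS; split.
  by apply/(word_trace_eqnsP alpha (fun u x => tr x [set inl u])).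
by apply/(word_trace_eqnsP alpha (fun u x => tr x (cyl_inf u))).
Qed.

Lemma cyl_inf_nil : cyl_inf [::] = [set: inf_word A].
Proof. by apply/seteqP; split=> // -[v|v] _; rewrite /cyl_inf /= ?prefixE ?take0. Qed.

Lemma trace_conclusion_inf : trace_conclusion (@S_inf A) (trace_sol_inf alpha) true.
Proof.
apply: (@trace_conclusion_pushforward _ _ _ (@S_inf A : set (set any_word)) _ _
  (fun x => [set y | in_cell (cyl_len alpha x) (halt_len alpha x) [::] y])
  walk_state (fun _ => cyl_inf [::])).
- by left.
- exact: setI_closed_inf.
- by move=> n; right; right; exists [::].
- by rewrite bigcup_const // cyl_inf_nil.
- by move=> x; exact: measurable_in_cell.
- move=> x _ [->|[[u ->]|[u ->]]]; first by rewrite preimage_set0 setI0.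
    by rewrite walk_state_halt; exact: measurable_in_halt.
  by rewrite walk_state_cyl; exact: measurable_in_cell.
- by move=> x; rewrite lebesgue_in_cell ?cyl_len_nil ?cyl_len_ge0.
- split.
  + move=> _ [->|[[u ->]|[u ->]]].
    * by under eq_fun do rewrite preimage_set0 setI0 measure0; exact: measurable_cst.
    * by under eq_fun do rewrite lebesgue_walk_state_halt; exact: measurable_halt_mass.
    * by under eq_fun do rewrite lebesgue_walk_state_cyl; exact: measurable_cyl_mass.
  + by move=> x; rewrite preimage_set0 setI0 measure0.
  + split=> [x|x a u]; first by rewrite lebesgue_walk_state_halt.
    rewrite lebesgue_walk_state_halt /=; congr Pa_integral.
    by apply/funext => x'; rewrite lebesgue_walk_state_halt.
  + by move=> x; rewrite lebesgue_walk_state_cyl.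
  + move=> x a u; rewrite lebesgue_walk_state_cyl /=; congr Pa_integral.
    by apply/funext => x'; rewrite lebesgue_walk_state_cyl.
- move=> tr htr x _ [->|[[u ->]|[u ->]]]; have [trS trC] := trace_sol_infP htr.
  + by rewrite preimage_set0 setI0 measure0; case: htr => _ ->.
  + by rewrite lebesgue_walk_state_halt trS.
  + by rewrite lebesgue_walk_state_cyl trC.
Qed.

End inf_case.

Section omega_case.
Context (R : realType) (d : measure_display) (X : measurableType d) (A : finType).
Variable alpha : R.-pker X ~> pts_space A X.
Hypothesis alpha_None : forall x, alpha x [set None] = 0.
Variable a0 : A.

Definition omega_word := nat -> A.
HB.instance Definition _ := Choice.copy omega_word (nat -> A).
HB.instance Definition _ := isPointed.Build omega_word (fun _ => a0).

Lemma halt_mass_None u x : halt_mass alpha u x = 0.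
Proof.
rewrite /halt_mass (_ : (fun x => _) = fun _ => 0); first exact: word_trace0.
by apply/funext => x'; exact: alpha_None.
Qed.

Section fixed_state.
Variable x : X.
Local Notation c := (cyl_len alpha x).
Local Notation s := (halt_len alpha x).
Let c_ge0 := cyl_len_ge0 alpha x.
Let s_ge0 := halt_len_ge0 alpha x.
Let c_split := cyl_len_split alpha x.
Let c_exact := cyl_len_split_prob (@prob_kernel _ _ _ _ _ alpha) x.

Lemma halt_word_None_state y : halt_word c s y = None.
Proof.
case hy: halt_word => [u|//]; move/(halt_wordP c_ge0 s_ge0 c_split): hy.
by rewrite /in_halt /halt_len halt_mass_None addr0 => /andP[/le_lt_trans h /h]; rewrite ltxx.
Qed.

Definition path_state : R -> omega_word := cell_path c s a0.

Lemma path_state_cyl u :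
  [set y | in_cell c s [::] y] `&` path_state @^-1` cyl_omega u = [set y | in_cell c s u y].
Proof.
have path_cyl y := cyl_omega_cell_path c_ge0 s_ge0 c_split c_exact a0 u
  ^~ (halt_word_None_state y).
apply/seteqP; split=> y /=; first by case=> y0 /(path_cyl _ y0).
move=> uy; have y0 := in_cell_root c_ge0 s_ge0 c_split uy.
by split=> //; apply/(path_cyl _ y0).
Qed.

Lemma lebesgue_path_state_cyl u : lebesgue_measure
  ([set y | in_cell c s [::] y] `&` path_state @^-1` cyl_omega u) = cyl_mass alpha u x.
Proof. by rewrite path_state_cyl lebesgue_in_cell // cyl_lenE. Qed.

End fixed_state.

Lemma trace_sol_omegaP tr : trace_sol_omega alpha tr ->
  forall u x, tr x (cyl_omega u) = cyl_mass alpha u x.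
Proof. by case=> _ _ t0 tS; apply/(word_trace_eqnsP alpha (fun u x => tr x (cyl_omega u))). Qed.

Lemma trace_conclusion_omega :
  trace_conclusion (@S_omega A) (trace_sol_omega alpha) true.
Proof.
apply: (@trace_conclusion_pushforward _ _ _ (@S_omega A : set (set omega_word)) _ _
  (fun x => [set y | in_cell (cyl_len alpha x) (halt_len alpha x) [::] y])
  path_state (fun _ => cyl_omega [::])).
- by left.
- exact: setI_closed_omega.
- by move=> n; right; exists [::].
- by rewrite bigcup_const //; apply/seteqP; split.
- by move=> x; exact: measurable_in_cell.
- move=> x _ [->|[u ->]]; first by rewrite preimage_set0 setI0.
  by rewrite path_state_cyl; exact: measurable_in_cell.
- by move=> x; rewrite lebesgue_in_cell ?cyl_len_nil ?cyl_len_ge0.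
- split.
  + move=> _ [->|[u ->]].
      by under eq_fun do rewrite preimage_set0 setI0 measure0; exact: measurable_cst.
    by under eq_fun do rewrite lebesgue_path_state_cyl; exact: measurable_cyl_mass.
  + by move=> x; rewrite preimage_set0 setI0 measure0.
  + by move=> x; rewrite lebesgue_path_state_cyl.
  + move=> x a u; rewrite lebesgue_path_state_cyl /=; congr Pa_integral.
    by apply/funext => x'; rewrite lebesgue_path_state_cyl.
- move=> tr htr x _ [->|[u ->]].
    by rewrite preimage_set0 setI0 measure0; case: htr => _ ->.
  by rewrite lebesgue_path_state_cyl (trace_sol_omegaP htr).
Qed.

End omega_case.

Lemma set_void_eq0 (B : set void) : B = set0.
Proof. by apply/seteqP; split=> -[]. Qed.

Lemma unique_prob_extension_void (R : realType) (t : set void -> \bar R) :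
  t set0 = 0 -> unique_prob_extension S_zero t false.
Proof.
move=> t0; have tE B : t B = 0 by rewrite (set_void_eq0 B).
have sums0 (m : set void -> \bar R) (F : nat -> set void) : (forall B, m B = 0) ->
    (fun n => \sum_(0 <= k < n) m (F k)) @ \oo --> m (\bigcup_n F n).
  move=> m0; rewrite m0 (_ : (fun n => \sum_(0 <= k < n) m (F k)) = fun _ => 0).
    exact: cvg_cst.
  by apply/funext => n; rewrite big1.
split.
- by move=> s _; rewrite tE lexx lee01.
- by split=> [|s _|F _ _ _]; [exact: t0|rewrite tE|exact: sums0].
- exists (fun _ => set0); split=> [//|n|]; first by rewrite tE ltry.
  by rewrite (set_void_eq0 setT) bigcup0.
exists (fun _ => 0); split=> //.
- by split=> // F _ _; exact: (sums0 (fun _ => 0)).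
- by move=> nu [nu0 _ _] _ B _; rewrite (set_void_eq0 B).
Qed.

Lemma trace_conclusion_zero (R : realType) (d : measure_display) (X : measurableType d) :
  trace_conclusion S_zero (trace_sol_zero (R := R) (X := X)) false.
Proof.
split.
- by exists (fun _ _ => 0); split=> // s _; exact: measurable_cst.
- by move=> tr1 tr2 [_ t1] [_ t2] x _ ->; rewrite t1 t2.
- by move=> tr [_ t0] x; exact: unique_prob_extension_void.
Qed.

(* With no letters and no halting, [alpha x] would be a probability measure
   carried by the null set [[set None]]: the state space is empty. *)
Lemma trace_conclusion_omega_no_letter (R : realType) (d : measure_display)
    (X : measurableType d) (A : finType) (alpha : R.-pker X ~> pts_space A X) :
  (forall x, alpha x [set None] = 0) -> (A -> False) ->
  trace_conclusion (@S_omega A) (trace_sol_omega alpha) true.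
Proof.
move=> alpha_None noA; have noX (x : X) : False.
  have := @prob_kernel _ _ _ _ _ alpha x; rewrite (_ : setT = [set None]) ?alpha_None.
    by move/eqP; rewrite eq_sym onee_eq0.
  by apply/seteqP; split=> // -[[a _]|] _ //; case: (noA a).
split.
- by exists (fun _ _ => 0); split=> [s _|x|x|x]; [exact: measurable_cst|case: (noX x)..].
- by move=> tr1 tr2 _ _ x; case: (noX x).
- by move=> tr _ x; case: (noX x).
Qed.

Theorem mainTheorem6 (R : realType) (d : measure_display)
    (X : measurableType d) (A : finType) :
  [/\ (* type 0 *)
      (forall alpha : R.-spker X ~> pts_space A X,
         (forall x, alpha x [set None] = 0) ->
         trace_conclusion (@S_zero) (trace_sol_zero (R:=R) (X:=X)) false),
      (* type * *)
      (forall alpha : R.-spker X ~> pts_space A X,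
         trace_conclusion (@S_star A) (trace_sol_star alpha) false),
      (* type omega *)
      (forall alpha : R.-pker X ~> pts_space A X,
         (forall x, alpha x [set None] = 0) ->
         trace_conclusion (@S_omega A) (trace_sol_omega alpha) true) &
      (* type infty *)
      (forall alpha : R.-pker X ~> pts_space A X,
         trace_conclusion (@S_inf A) (trace_sol_inf alpha) true)].
Proof.
split=> [alpha _|alpha|alpha alpha_None|alpha].
- exact: trace_conclusion_zero.
- exact: trace_conclusion_star.
- have [[a0 _]|noA] := pselect (exists a : A, True).
    exact: trace_conclusion_omega.
  by apply: trace_conclusion_omega_no_letter => // a; apply: noA; exists a.
- exact: trace_conclusion_inf.
Qed.
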